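(* Let $t$ be a table with $n$ rows, and fix a predicate such that exactly $pn$ rows of $t$ satisfy it, where $p\in(0,1]$. Draw a sample of $k\ge 1$ rows from $t$ uniformly at random with replacement (i.e., $k$ i.i.d. uniform draws), let $\hat X$ be the number of sampled rows satisfying the predicate, and estimate the cardinality by $\mathrm{est}=\frac{n}{k}\hat X$, the true cardinality being $\mathrm{true}=pn$. Let $\sigma^2=p(1-p)$. Then for every $q\ge 1$, $$\mathbb{P}(\text{Q-error}\le q)\ \ge\ 1-\Omega-\Psi,$$ where $$\Omega=\min\Bigg(\Big(\frac{e^{q-1}}{q^{q}}\Big)^{pk},\ \exp\Big(-\frac{k(pq-p)^2}{2\sigma^2+2(pq-p)/3}\Big)\Bigg),$$ $$\Psi=\min\Bigg(\Big(e^{\frac1q-1}\,q^{\frac1q}\Big)^{pk},\ \exp\Big(-\frac{k(p-p/q)^2}{2\sigma^2+2(p-p/q)/3}\Big)\Bigg).$$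
   Context: The Q-error of an estimate is $\max\big(\frac{\mathrm{true}'}{\mathrm{est}'},\frac{\mathrm{est}'}{\mathrm{true}'}\big)$, where $\mathrm{est}'=\max(\mathrm{est},1)$ and $\mathrm{true}'=\max(\mathrm{true},1)$ (to avoid division by zero). $\Omega$ bounds the probability of over-estimation ($\mathrm{est}\ge q\cdot\mathrm{true}$) and $\Psi$ the probability of under-estimation ($\mathrm{est}\le \mathrm{true}/q$). *)

From mathcomp Require Import all_boot all_order all_algebra.
From mathcomp Require Import reals.
From mathcomp Require Import sequences exp.
Set Implicit Arguments. Unset Strict Implicit. Unset Printing Implicit Defensive.
Import Order.TTheory GRing.Theory Num.Theory.
Local Open Scope ring_scope.

(* A sample of k rows drawn with replacement from a table with rows 'I_n is a
   function s : 'I_k -> 'I_n; k i.i.d. uniform draws = uniform distribution on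
   {ffun 'I_k -> 'I_n}. *)
Definition sample_prob (R : realType) (n k : nat)
  (E : pred {ffun 'I_k -> 'I_n}) : R :=
  #|[set s | E s]|%:R / #|{ffun 'I_k -> 'I_n}|%:R.

Definition Xhat (n k : nat) (P : pred 'I_n) (s : {ffun 'I_k -> 'I_n}) : nat :=
  #|[set j : 'I_k | P (s j)]|.

Definition sample_est (R : realType) (n k : nat) (X : nat) : R :=
  n%:R / k%:R * X%:R.

Definition qerror (R : realType) (est tru : R) : R :=
  let e := Num.max est 1 in let t := Num.max tru 1 in
  Num.max (t / e) (e / t).

Definition Omega_bound (R : realType) (p q : R) (k : nat) : R :=
  let s2 := p * (1 - p) in
  Num.min ((expR (q - 1) / q `^ q) `^ (p * k%:R))
          (expR (- (k%:R * (p * q - p) ^+ 2 / (2 * s2 + 2 * (p * q - p) / 3)))).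

Definition Psi_bound (R : realType) (p q : R) (k : nat) : R :=
  let s2 := p * (1 - p) in
  Num.min ((expR (q^-1 - 1) * q `^ (q^-1)) `^ (p * k%:R))
          (expR (- (k%:R * (p - p / q) ^+ 2 / (2 * s2 + 2 * (p - p / q) / 3)))).

From mathcomp Require Import all_boot all_order all_algebra.
From mathcomp Require Import reals.
From mathcomp Require Import sequences exp.
From mathcomp Require Import topology normedtype derive.
From mathcomp Require Import ring lra.

(* The number Xhat of sampled rows satisfying the predicate is a sum of k
   independent Bernoulli(p) indicators, and the Q-error is at most q as soon as
   k p / q <= Xhat <= k p q, so by the union bound it suffices to bound the two
   tails of Xhat.  Both follow from Chernoff's method: for mu >= 0 the
   probability that Xhat >= k b is at most (p e^mu + 1 - p)^k e^(-mu k b).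
   Taking mu = ln q gives the multiplicative Chernoff bounds.  Bernstein's
   bounds use instead the centred moment bound
   E e^(l (Y - p)) <= exp (p (1 - p) (e^l - 1 - l)), the estimate
   e^l - 1 - l <= l^2 / (2 (1 - l / 3)) and the choice
   l = t / (p (1 - p) + t / 3). *)

Set Implicit Arguments.
Unset Strict Implicit.
Unset Printing Implicit Defensive.
Import Order.TTheory GRing.Theory Num.Theory numFieldNormedType.Exports.
Local Open Scope ring_scope.

Section ExpInequalities.
Context {R : realType}.
Implicit Types l t x : R.

Lemma ge0_of_derive_ge0 (f df : R -> R) : f 0 = 0 ->
  (forall x, is_derive x 1 f (df x)) -> (forall x, 0 <= x -> 0 <= df x) ->
  forall x, 0 <= x -> 0 <= f x.
Proof.
move=> f0 fD dfge0 x x0.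
have [c] : exists2 c, c \in `[0, x]%R & f x - f 0 = df c * (x - 0).
  apply: MVT_segment => //; apply/continuous_subspaceT => r.
  by apply/differentiable_continuous/derivable1_diffP; case: (fD r).
rewrite in_itv /= f0 !subr0 => /andP[c0 _] ->.
by rewrite mulr_ge0 // dfge0.
Qed.

Lemma expR_sub1Dx_ge_sqr l : 0 <= l -> l ^+ 2 / 2 <= expR l - 1 - l.
Proof.
move=> l0; rewrite -subr_ge0.
apply: (@ge0_of_derive_ge0 (fun l => expR l - 1 - l - l ^+ 2 / 2)
  (fun l => expR l - 1 - l)) => //.
- by rewrite expR0 expr0n /= mul0r; lra.
- by move=> x; apply: is_derive_eq; rewrite /GRing.scale /=; lra.
- by move=> x _; have := expR_ge1Dx x; lra.
Qed.

Lemma expRN_le_sqr x : 0 <= x -> expR (- x) <= 1 - x + x ^+ 2 / 2.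
Proof.
move=> x0; rewrite -subr_ge0.
apply: (@ge0_of_derive_ge0 (fun x => 1 - x + x ^+ 2 / 2 - expR (- x))
  (fun x => -1 + x + expR (- x))) => //.
- by rewrite oppr0 expR0 expr0n /= mul0r; lra.
- by move=> y; apply: is_derive_eq; rewrite /GRing.scale /=; lra.
- by move=> y _; have := expR_ge1Dx (- y); lra.
Qed.

Lemma expR_sub1_scale_le x l : 0 <= x <= 1 -> 0 <= l ->
  expR (l * x) - 1 <= x * (expR l - 1).
Proof.
move=> /andP[x0 x1] l0; rewrite -subr_ge0.
apply: (@ge0_of_derive_ge0 (fun l => x * (expR l - 1) - (expR (l * x) - 1))
  (fun l => x * expR l - x * expR (l * x))) => //.
- by rewrite mul0r expR0; lra.
- by move=> y; apply: is_derive_eq; rewrite /GRing.scale /=; lra.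
- move=> y y0; rewrite subr_ge0 ler_wpM2l // ler_expR.
  by rewrite ler_piMr.
Qed.

Lemma expR_sub1Dx_scale_le x l : 0 <= x <= 1 -> 0 <= l ->
  expR (l * x) - 1 - l * x <= x ^+ 2 * (expR l - 1 - l).
Proof.
move=> x01 l0; rewrite -subr_ge0.
apply: (@ge0_of_derive_ge0
   (fun l => x ^+ 2 * (expR l - 1 - l) - (expR (l * x) - 1 - l * x))
   (fun l => x * (x * (expR l - 1) - (expR (l * x) - 1)))) => //.
- by rewrite !mul0r expR0; lra.
- by move=> y; apply: is_derive_eq; rewrite /GRing.scale /=; lra.
- move=> y y0; case/andP: (x01) => x0 _.
  by rewrite mulr_ge0 // subr_ge0 expR_sub1_scale_le.
Qed.

Lemma expR_le_taylor2 x l : -1 <= x <= 1 -> 0 <= l ->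
  expR (l * x) <= 1 + l * x + x ^+ 2 * (expR l - 1 - l).
Proof.
move=> /andP[xN1 x1] l0; have [x0|x0] := lerP 0 x.
  have x01 : 0 <= x <= 1 by rewrite x0 x1.
  by have := expR_sub1Dx_scale_le x01 l0; lra.
have nx0 : 0 <= - x by lra.
have := expRN_le_sqr (mulr_ge0 l0 nx0).
have := ler_wpM2l (sqr_ge0 x) (expR_sub1Dx_ge_sqr l0).
rewrite mulrN opprK sqrrN exprMn; lra.
Qed.


Lemma expR_sub1Dx_le_ratio l : 0 <= l < 3 ->
  expR l - 1 - l <= 3 * l ^+ 2 / (6 - 2 * l).
Proof.
move=> /andP[l0 l3]; rewrite ler_pdivlMr; last by lra.
(* g0, g1 = g0' and g2 = g1' vanish at 0, and g2' x = 2 x e^x is nonnegative. *)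
have g2 x : 0 <= x -> 0 <= 2 - 2 * expR x + 2 * x * expR x.
  apply: (@ge0_of_derive_ge0 (fun x => 2 - 2 * expR x + 2 * x * expR x)
    (fun x => 2 * x * expR x)).
  - by rewrite expR0; lra.
  - by move=> y; apply: is_derive_eq; rewrite /GRing.scale /=; lra.
  - by move=> y y0; rewrite !mulr_ge0 // expR_ge0.
have g1 x : 0 <= x -> 0 <= 2 * x + 4 - 4 * expR x + 2 * x * expR x.
  apply: (@ge0_of_derive_ge0 (fun x => 2 * x + 4 - 4 * expR x + 2 * x * expR x)
    (fun x => 2 - 2 * expR x + 2 * x * expR x)) => //.
  - by rewrite expR0; lra.
  - by move=> y; apply: is_derive_eq; rewrite /GRing.scale /=; lra.
have g0 : 0 <= 3 * l ^+ 2 - (6 - 2 * l) * (expR l - 1 - l).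
  apply: (@ge0_of_derive_ge0 (fun x => 3 * x ^+ 2 - (6 - 2 * x) * (expR x - 1 - x))
    (fun x => 2 * x + 4 - 4 * expR x + 2 * x * expR x)) => //.
  - by rewrite expR0 expr0n /=; lra.
  - by move=> y; apply: is_derive_eq; rewrite /GRing.scale /=; lra.
by rewrite mulrC; lra.
Qed.

Lemma centered_bernoulli_mgf_le p l : 0 <= p <= 1 -> 0 <= l ->
  p * expR (l * (1 - p)) + (1 - p) * expR (- (l * p))
    <= expR (p * (1 - p) * (expR l - 1 - l)).
Proof.
move=> /andP[p0 p1] l0; apply: le_trans (expR_ge1Dx _).
have q0 : 0 <= 1 - p by lra.
have x1 : -1 <= 1 - p <= 1 by apply/andP; split; lra.
have x2 : -1 <= - p <= 1 by apply/andP; split; lra.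
have := ler_wpM2l p0 (expR_le_taylor2 x1 l0).
have := ler_wpM2l q0 (expR_le_taylor2 x2 l0).
rewrite mulrN sqrrN; nra.
Qed.

Lemma bernstein_exponent_le s t l : 0 <= s -> 0 <= t -> l = t / (s + t / 3) ->
  s * (expR l - 1 - l) - l * t <= - (t ^+ 2 / (2 * s + 2 * t / 3)).
Proof.
move=> s0 t0 ->; have [->|s_gt0] := eqVneq s 0.
  (* l = 3, or the junk value 0 of t / 0 when t = 0 as well *)
  rewrite mul0r mulr0 !add0r; have [->|t_neq0] := eqVneq t 0.
    by rewrite !mul0r mulr0 expr0n /= mul0r oppr0.
  have -> : t / (t / 3) = 3 by field.
  have -> : t ^+ 2 / (2 * t / 3) = 3 * t / 2 by field.
  lra.
have sp : 0 < s by rewrite lt0r s_gt0.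
have Dp : 0 < s + t / 3 by lra.
have l3 : t / (s + t / 3) < 3 by rewrite ltr_pdivrMr //; lra.
have l03 : 0 <= t / (s + t / 3) < 3 by rewrite l3 divr_ge0 // ltW.
have := ler_wpM2l s0 (expR_sub1Dx_le_ratio l03).
have -> : s * (3 * (t / (s + t / 3)) ^+ 2 / (6 - 2 * (t / (s + t / 3))))
    = t ^+ 2 / (s + t / 3) / 2.
  by field; rewrite ?lt0r_neq0 //; lra.
have -> : t ^+ 2 / (2 * s + 2 * t / 3) = t ^+ 2 / (s + t / 3) / 2.
  by field; lra.
have -> : t / (s + t / 3) * t = t ^+ 2 / (s + t / 3) by field; lra.
lra.
Qed.

Lemma bernstein_factor_le p t l : 0 <= p <= 1 -> 0 <= t ->
  l = t / (p * (1 - p) + t / 3) ->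
  (p * expR (l * (1 - p)) + (1 - p) * expR (- (l * p))) * expR (- (l * t))
    <= expR (- (t ^+ 2 / (2 * (p * (1 - p)) + 2 * t / 3))).
Proof.
move=> p01 t0 lE; have /andP[p0 p1] := p01.
have s0 : 0 <= p * (1 - p) by rewrite mulr_ge0 // subr_ge0.
have l0 : 0 <= l by rewrite lE divr_ge0 // addr_ge0 // divr_ge0.
apply: le_trans (ler_wpM2r (expR_ge0 _) (centered_bernoulli_mgf_le p01 l0)) _.
by rewrite -expRD ler_expR; apply: bernstein_exponent_le.
Qed.

Lemma chernoff_factor_le (p mu b : R) :
  (p * expR mu + (1 - p)) * expR (- (mu * b)) <= expR (p * (expR mu - 1) - mu * b).
Proof.
rewrite expRD ler_wpM2r ?expR_ge0 //; apply: le_trans (expR_ge1Dx _); lra.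
Qed.

Lemma bernoulli_factor_centered (p mu b : R) :
  (p * expR mu + (1 - p)) * expR (- (mu * b)) =
  (p * expR (mu * (1 - p)) + (1 - p) * expR (- (mu * p))) * expR (- (mu * (b - p))).
Proof.
rewrite (_ : mu * (1 - p) = mu + - (mu * p)); last by ring.
rewrite (_ : - (mu * b) = - (mu * p) + - (mu * (b - p))); last by ring.
by rewrite !expRD; ring.
Qed.

End ExpInequalities.

Lemma sum_indicator (R : pzSemiRingType) (T : finType) (Q : pred T) :
  \sum_x (Q x : nat)%:R = #|[set x | Q x]|%:R :> R.
Proof.
rewrite -sum1_card natr_sum [RHS]big_mkcond.
by apply: eq_bigr => x _; rewrite inE; case: (Q x).
Qed.

Section UniformSampling.
Variables (R : realType) (n k : nat).
Local Notation sample := {ffun 'I_k -> 'I_n}.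

Lemma sample_probE (E : pred sample) :
  sample_prob R E = (\sum_s (E s : nat)%:R) / (n ^ k)%:R.
Proof.
by rewrite /sample_prob card_ffun !card_ord sum_indicator.
Qed.

Lemma sample_prob_le_mean (E : pred sample) (g : sample -> R) :
  (forall s, 0 <= g s) -> (forall s, E s -> 1 <= g s) ->
  sample_prob R E <= (\sum_s g s) / (n ^ k)%:R.
Proof.
move=> g_ge0 gE; rewrite sample_probE ler_wpM2r ?invr_ge0 ?ler0n //.
by apply: ler_sum => s _; case: (boolP (E s)) => [/gE|_].
Qed.

Lemma sample_prob_compl_union (G E1 E2 : pred sample) : (0 < n)%N ->
  (forall s, ~~ E1 s -> ~~ E2 s -> G s) ->
  1 - sample_prob R E1 - sample_prob R E2 <= sample_prob R G.
Proof.
move=> n_gt0 hG; rewrite !sample_probE.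
set N := (n ^ k)%:R; have N_gt0 : 0 < N by rewrite ltr0n expn_gt0 n_gt0.
set SG := \sum_s (G s : nat)%:R.
set S1 := \sum_s (E1 s : nat)%:R; set S2 := \sum_s (E2 s : nat)%:R.
rewrite -subr_ge0 (_ : SG / N - (1 - S1 / N - S2 / N) = (SG + S1 + S2 - N) / N);
  last by field; lra.
apply: divr_ge0 (ltW N_gt0); rewrite subr_ge0.
have -> : N = \sum_(s : sample) 1 by rewrite sumr_const card_ffun !card_ord.
rewrite -!big_split; apply: ler_sum => s _; move: (hG s).
by case: (G s); case: (E1 s); case: (E2 s) => //=; lra.
Qed.

Lemma sum_prod_ffun (F : 'I_n -> R) :
  \sum_(s : sample) \prod_j F (s j) = (\sum_i F i) ^+ k.
Proof.
by rewrite -(bigA_distr_bigA (fun (_ : 'I_k) => F)) /= prodr_const card_ord.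
Qed.

End UniformSampling.

Section PredicateCount.
Variables (R : realType) (n k : nat) (P : pred 'I_n) (p : R).
Hypotheses (n_gt0 : (0 < n)%N) (cardP : #|P|%:R = p * n%:R :> R).
Local Notation sample := {ffun 'I_k -> 'I_n}.

Let n_gt0R : 0 < n%:R :> R. Proof. by rewrite ltr0n. Qed.

Lemma selectivity_itv : 0 <= p <= 1.
Proof.
have cardP_ge0 : 0 <= #|P|%:R :> R by exact: ler0n.
have cardP_le : #|P|%:R <= n%:R :> R.
  by rewrite ler_nat -[n in (_ <= n)%N]card_ord max_card.
rewrite cardP in cardP_ge0 cardP_le.
by rewrite -(pmulr_lge0 _ n_gt0R) cardP_ge0 -(ler_pM2r n_gt0R) mul1r.
Qed.

Let variance_ge0 : 0 <= p * (1 - p).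
Proof. by case/andP: selectivity_itv => p0 p1; rewrite mulr_ge0 // subr_ge0. Qed.

Lemma XhatE (s : sample) : (Xhat P s)%:R = \sum_j (P (s j) : nat)%:R :> R.
Proof. by rewrite sum_indicator. Qed.

Lemma sum_expR_pred mu :
  \sum_i expR (mu * (P i : nat)%:R) = n%:R * (p * expR mu + (1 - p)).
Proof.
have indicatorE i : expR (mu * (P i : nat)%:R) = 1 + (P i : nat)%:R * (expR mu - 1).
  by case: (P i); rewrite ?mulr1 ?mulr0 ?mul1r ?mul0r ?expR0 ?addr0 // addrC subrK.
rewrite (eq_bigr _ (fun i _ => indicatorE i)) big_split /= sumr_const card_ord.
rewrite -mulr_suml sum_indicator (_ : #|[set i | P i]| = #|P|).
  by rewrite cardP; ring.
by apply: eq_card => i; rewrite inE.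
Qed.

Lemma sample_prob_tail_le mu b (E : pred sample) :
  (forall s, E s -> 0 <= mu * ((Xhat P s)%:R - k%:R * b)) ->
  sample_prob R E <= ((p * expR mu + (1 - p)) * expR (- (mu * b))) ^+ k.
Proof.
(* On E, exp (mu (Xhat - k b)) >= 1, and it factorises over the k draws. *)
move=> hE; pose F i := expR (mu * (P i : nat)%:R - mu * b).
apply: (le_trans (@sample_prob_le_mean R n k E (fun s => \prod_j F (s j)) _ _)).
- by move=> s; apply: prodr_ge0 => j _; exact: expR_ge0.
- move=> s /hE Es; rewrite /F -expR_sum; apply: le_trans (expR_ge1Dx _).
  rewrite lerDl sumrB -mulr_sumr -XhatE sumr_const card_ord.
  by rewrite (_ : _ - _ = mu * ((Xhat P s)%:R - k%:R * b)) //; ring.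
rewrite sum_prod_ffun (eq_bigr _ (fun i _ => expRD _ _)) -mulr_suml sum_expR_pred.
rewrite -mulrA exprMn natrX mulrAC mulfV ?mul1r //.
by rewrite expf_neq0 // pnatr_eq0 -lt0n.
Qed.

Lemma sample_prob_tail_le_expR mu b c (E : pred sample) :
  (forall s, E s -> 0 <= mu * ((Xhat P s)%:R - k%:R * b)) ->
  (p * expR mu + (1 - p)) * expR (- (mu * b)) <= expR c ->
  sample_prob R E <= expR (c * k%:R).
Proof.
move=> hE hc; apply: le_trans (sample_prob_tail_le hE) _.
have /andP[p0 p1] := selectivity_itv.
rewrite expRM_natr lerXn2r // nnegrE ?expR_ge0 //.
by rewrite mulr_ge0 ?expR_ge0 // addr_ge0 ?mulr_ge0 ?expR_ge0 // subr_ge0.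
Qed.

Lemma prob_Xhat_ge_chernoff q (E : pred sample) : 1 <= q ->
  (forall s, E s -> k%:R * (p * q) <= (Xhat P s)%:R) ->
  sample_prob R E <= (expR (q - 1) / q `^ q) `^ (p * k%:R).
Proof.
move=> q_ge1 hE; have q_gt0 : 0 < q by exact: lt_le_trans ltr01 q_ge1.
have -> : (expR (q - 1) / q `^ q) `^ (p * k%:R)
    = expR ((p * (expR (ln q) - 1) - ln q * (p * q)) * k%:R).
  rewrite [q `^ q]/powR gt_eqF // -expRB -expRM lnK ?posrE //; congr expR; ring.
apply: sample_prob_tail_le_expR (chernoff_factor_le p (ln q) (p * q)).
by move=> s /hE Es; rewrite mulr_ge0 ?ln_ge0 // subr_ge0.
Qed.

Lemma prob_Xhat_le_chernoff q (E : pred sample) : 1 <= q ->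
  (forall s, E s -> (Xhat P s)%:R <= k%:R * (p / q)) ->
  sample_prob R E <= (expR (q^-1 - 1) * q `^ q^-1) `^ (p * k%:R).
Proof.
move=> q_ge1 hE; have q_gt0 : 0 < q by exact: lt_le_trans ltr01 q_ge1.
have -> : (expR (q^-1 - 1) * q `^ q^-1) `^ (p * k%:R)
    = expR ((p * (expR (- ln q) - 1) - - ln q * (p / q)) * k%:R).
  rewrite [q `^ _]/powR gt_eqF // -expRD -expRM expRN lnK ?posrE //.
  by congr expR; ring.
apply: sample_prob_tail_le_expR (chernoff_factor_le p (- ln q) (p / q)).
by move=> s /hE Es; rewrite mulr_le0 ?oppr_le0 ?ln_ge0 // subr_le0.
Qed.

Lemma prob_Xhat_ge_bernstein t (E : pred sample) : 0 <= t ->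
  (forall s, E s -> k%:R * (p + t) <= (Xhat P s)%:R) ->
  sample_prob R E <=
    expR (- (k%:R * t ^+ 2 / (2 * (p * (1 - p)) + 2 * t / 3))).
Proof.
move=> t_ge0 hE; set l := t / (p * (1 - p) + t / 3).
have l_ge0 : 0 <= l by rewrite divr_ge0 // addr_ge0 ?divr_ge0.
rewrite (_ : - _ = - (t ^+ 2 / (2 * (p * (1 - p)) + 2 * t / 3)) * k%:R); last by ring.
apply: (@sample_prob_tail_le_expR l (p + t)).
  by move=> s /hE Es; rewrite mulr_ge0 // subr_ge0.
rewrite bernoulli_factor_centered (_ : p + t - p = t); last by ring.
exact: bernstein_factor_le selectivity_itv t_ge0 erefl.
Qed.

Lemma prob_Xhat_le_bernstein t (E : pred sample) : 0 <= t ->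
  (forall s, E s -> (Xhat P s)%:R <= k%:R * (p - t)) ->
  sample_prob R E <=
    expR (- (k%:R * t ^+ 2 / (2 * (p * (1 - p)) + 2 * t / 3))).
Proof.
move=> t_ge0 hE; set l := t / (p * (1 - p) + t / 3).
have l_ge0 : 0 <= l by rewrite divr_ge0 // addr_ge0 ?divr_ge0.
rewrite (_ : - _ = - (t ^+ 2 / (2 * (p * (1 - p)) + 2 * t / 3)) * k%:R); last by ring.
apply: (@sample_prob_tail_le_expR (- l) (p - t)).
  by move=> s /hE Es; rewrite mulr_le0 ?oppr_le0 // subr_le0.
(* the lower tail for p is the upper tail for 1 - p, with the same variance *)
have varC : (1 - p) * (1 - (1 - p)) = p * (1 - p) by ring.
have q01 : 0 <= 1 - p <= 1.
  by case/andP: selectivity_itv => p0 p1; rewrite subr_ge0 p1 lerBlDr lerDl.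
rewrite bernoulli_factor_centered -varC.
have -> : (p * expR (- l * (1 - p)) + (1 - p) * expR (- (- l * p)))
      * expR (- (- l * (p - t - p)))
    = ((1 - p) * expR (l * (1 - (1 - p))) + (1 - (1 - p)) * expR (- (l * (1 - p))))
      * expR (- (l * t)).
  by rewrite addrC; congr ((_ * expR _ + _ * expR _) * expR _); ring.
by apply: bernstein_factor_le q01 t_ge0 _; rewrite varC.
Qed.

End PredicateCount.

Section Estimator.
Context {R : realType}.

Lemma qerror_le (est tru q : R) : 1 <= tru -> 1 <= q ->
  tru / q <= est -> est <= q * tru -> qerror est tru <= q.
Proof.
move=> tru_ge1 q_ge1 est_ge est_le.
have q_gt0 : 0 < q by exact: lt_le_trans ltr01 q_ge1.
rewrite /qerror /= (max_l tru_ge1); set e := Num.max est 1.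
have e_ge1 : 1 <= e by rewrite le_max lexx orbT.
have e_gt0 : 0 < e by exact: lt_le_trans ltr01 e_ge1.
have tru_le : tru <= q * tru by rewrite ler_peMl // (le_trans ler01).
have e_le : e <= q * tru by rewrite ge_max est_le (le_trans tru_ge1).
have e_ge : tru / q <= e by rewrite (le_trans est_ge) // le_max lexx.
rewrite ge_max !ler_pdivrMr ?(lt_le_trans ltr01) // mulrC e_le andbT.
by rewrite -ler_pdivrMr.
Qed.

Lemma sample_estE n k X : sample_est R n k X = X%:R / k%:R * n%:R.
Proof. by rewrite /sample_est mulrC mulrA mulrAC. Qed.

End Estimator.

Theorem theorem1 (R : realType) (n k : nat) (P : pred 'I_n) (p q : R)
  (hn : (0 < n)%N) (hk : (1 <= k)%N)
  (hp0 : 0 < p) (hp1 : p <= 1)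
  (hP : #|P|%:R = p * n%:R :> R)
  (hq : 1 <= q) :
  sample_prob R (fun s : {ffun 'I_k -> 'I_n} =>
     qerror (sample_est R n k (Xhat P s)) (p * n%:R) <= q)
  >= 1 - Omega_bound p q k - Psi_bound p q k.
Proof.
have q_gt0 : 0 < q by exact: lt_le_trans ltr01 hq.
have k_gt0 : 0 < k%:R :> R by rewrite ltr0n.
have pn_ge1 : 1 <= p * n%:R.
  by rewrite -hP ler1n -(ltr0n R) hP mulr_gt0 // ltr0n.
pose over (s : {ffun 'I_k -> 'I_n}) := k%:R * (p * q) < (Xhat P s)%:R.
pose under (s : {ffun 'I_k -> 'I_n}) := (Xhat P s)%:R < k%:R * (p / q).
apply: (le_trans _ (@sample_prob_compl_union R n k _ over under hn _)).
  apply: lerB; first apply: lerB (lexx _) _.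
  - rewrite /Omega_bound /= le_min; apply/andP; split.
      by apply: (prob_Xhat_ge_chernoff hn hP hq) => s /ltW.
    apply: (prob_Xhat_ge_bernstein hn hP); first by rewrite subr_ge0 ler_peMr // ltW.
    by move=> s /ltW; rewrite addrC subrK.
  - rewrite /Psi_bound /= le_min; apply/andP; split.
      by apply: (prob_Xhat_le_chernoff hn hP hq) => s /ltW.
    apply: (prob_Xhat_le_bernstein hn hP).
      by rewrite subr_ge0 ler_pdivrMr // ler_peMr // ltW.
    by move=> s /ltW; rewrite opprB addrC subrK.
move=> s; rewrite /over /under -!leNgt => X_le X_ge.
apply: qerror_le pn_ge1 hq _ _; rewrite sample_estE.
- by rewrite mulrAC ler_wpM2r // ler_pdivlMr // mulrC.
- by rewrite mulrA ler_wpM2r // ler_pdivrMr // mulrC [q * p]mulrC.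
Qed.
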